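(* Let $\mathfrak k$ be a Hilbert–Lie algebra, $\phi$ an automorphism of $\mathfrak k$ of finite order, and $\mathfrak t\subseteq\mathfrak k^\phi$ a maximal abelian subalgebra of the fixed point algebra. Then the centralizer $\mathfrak t_{\mathfrak k}:=\mathfrak z_{\mathfrak k}(\mathfrak t)=\{x\in\mathfrak k:[x,\mathfrak t]=0\}$ is a maximal abelian subalgebra of $\mathfrak k$.
   Context: A Hilbert–Lie algebra is a real Lie algebra with Hilbert space structure such that $\langle[x,y],z\rangle=\langle x,[y,z]\rangle$. Automorphisms are isometric Lie algebra automorphisms; $\mathfrak k^\phi=\{x\in\mathfrak k:\phi(x)=x\}$. *)

From Stdlib Require Import Reals.
Open Scope R_scope.

Record HilbertLie := {
  carrier :> Type;
  zero : carrier;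
  add : carrier -> carrier -> carrier;
  opp : carrier -> carrier;
  scal : R -> carrier -> carrier;
  inner : carrier -> carrier -> R;
  br : carrier -> carrier -> carrier;
  addA : forall x y z, add x (add y z) = add (add x y) z;
  addC : forall x y, add x y = add y x;
  add0 : forall x, add zero x = x;
  addN : forall x, add x (opp x) = zero;
  scalA : forall a b x, scal a (scal b x) = scal (a * b) x;
  scal1 : forall x, scal 1 x = x;
  scalDr : forall a x y, scal a (add x y) = add (scal a x) (scal a y);
  scalDl : forall a b x, scal (a + b) x = add (scal a x) (scal b x);
  innerC : forall x y, inner x y = inner y x;
  innerDl : forall x y z, inner (add x y) z = inner x z + inner y z;
  innerZl : forall a x y, inner (scal a x) y = a * inner x y;
  inner_ge0 : forall x, 0 <= inner x x;
  inner_eq0 : forall x, inner x x = 0 -> x = zero;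
  complete : forall u : nat -> carrier,
    (forall eps, 0 < eps -> exists N, forall m n, (N <= m)%nat -> (N <= n)%nat ->
        sqrt (inner (add (u m) (opp (u n))) (add (u m) (opp (u n)))) < eps) ->
    exists l, forall eps, 0 < eps -> exists N, forall n, (N <= n)%nat ->
        sqrt (inner (add (u n) (opp l)) (add (u n) (opp l))) < eps;
  brDl : forall x y z, br (add x y) z = add (br x z) (br y z);
  brZl : forall a x y, br (scal a x) y = scal a (br x y);
  brDr : forall x y z, br x (add y z) = add (br x y) (br x z);
  brZr : forall a x y, br x (scal a y) = scal a (br x y);
  br_alt : forall x, br x x = zero;
  jacobi : forall x y z,
    add (br x (br y z)) (add (br y (br z x)) (br z (br x y))) = zero;
  inner_inv : forall x y z, inner (br x y) z = inner x (br y z)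
}.

Arguments zero {h}. Arguments add {h}. Arguments opp {h}. Arguments scal {h}.
Arguments inner {h}. Arguments br {h}.

Definition is_automorphism (k : HilbertLie) (phi : k -> k) : Prop :=
  (forall x y, phi (add x y) = add (phi x) (phi y)) /\
  (forall a x, phi (scal a x) = scal a (phi x)) /\
  (forall x y, phi (br x y) = br (phi x) (phi y)) /\
  (forall x y, inner (phi x) (phi y) = inner x y) /\
  (forall x y, phi x = phi y -> x = y) /\
  (forall y, exists x, phi x = y).

Fixpoint iter_fun {T : Type} (n : nat) (f : T -> T) (x : T) : T :=
  match n with O => x | S n' => f (iter_fun n' f x) end.

Definition finite_order (k : HilbertLie) (phi : k -> k) : Prop :=
  exists n : nat, (1 <= n)%nat /\ forall x, iter_fun n phi x = x.

Definition fixed_pts (k : HilbertLie) (phi : k -> k) : k -> Prop :=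
  fun x => phi x = x.

Definition subalgebra (k : HilbertLie) (S : k -> Prop) : Prop :=
  S zero /\ (forall x y, S x -> S y -> S (add x y)) /\
  (forall a x, S x -> S (scal a x)) /\
  (forall x y, S x -> S y -> S (br x y)).

Definition abelian_subalgebra (k : HilbertLie) (S : k -> Prop) : Prop :=
  subalgebra k S /\ (forall x y, S x -> S y -> br x y = zero).

Definition max_abelian_in (k : HilbertLie) (A S : k -> Prop) : Prop :=
  abelian_subalgebra k S /\ (forall x, S x -> A x) /\
  (forall S' : k -> Prop, abelian_subalgebra k S' -> (forall x, S' x -> A x) ->
     (forall x, S x -> S' x) -> forall x, S' x -> S x).

Definition whole (k : HilbertLie) : k -> Prop := fun _ => True.

Definition centralizer (k : HilbertLie) (t : k -> Prop) : k -> Prop :=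
  fun x => forall y, t y -> br x y = zero.

(* Maximality of z := z_k(t) among
   abelian subalgebras is immediate (an abelian subalgebra containing t
   centralizes t); the content is that z is abelian.  Now z is a phi-invariant
   subalgebra and, by maximality of t, its phi-fixed elements lie in t, hence
   are central in z.  Complexify and let E_p be the zeta^p-eigenspace of phi
   in z_C (zeta a primitive n-th root of unity).  Then E_0 is central,
   [E_p,E_q] is contained in E_(p+q), and an eigenvector b commutes with its
   conjugate, so ad b is normal for the invariant hermitian form and
   (ad b)^2 v = 0 implies [b,v] = 0.  Together these give [E_p,E_q] = 0 by a
   Euclidean descent on (p,q), and the discrete Fourier decomposition
   x = (1/n) sum_j P_j x with P_j x in E_j yields [x,y] = 0. *)

From Stdlib Require Import Reals Lra Lia List Wf_nat.
From Coquelicot Require Import Complex.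
Open Scope R_scope.

Section VectorSpace.
Variable k : HilbertLie.
Local Notation V := (carrier k).

Lemma addr0 (x : V) : add x zero = x.
Proof. rewrite (addC k); apply add0. Qed.

Lemma add_cancel (a x y : V) : add a x = add a y -> x = y.
Proof.
  intros H.
  rewrite <- (add0 k x), <- (add0 k y), <- (addN k a), (addC k a), <- !(addA k), H.
  reflexivity.
Qed.

Lemma scal0 (x : V) : scal 0 x = zero.
Proof.
  apply (add_cancel (scal 0 x)).
  rewrite <- (scalDl k), Rplus_0_r, addr0; reflexivity.
Qed.

Lemma scal_zero (a : R) : scal a (@zero k) = zero.
Proof.
  apply (add_cancel (scal a zero)).
  rewrite <- (scalDr k), !addr0; reflexivity.
Qed.

Lemma opp_scal (x : V) : opp x = scal (-1) x.
Proof.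
  apply (add_cancel x).
  rewrite (addN k), <- (scal1 k x) at 1.
  rewrite <- (scalDl k), Rplus_opp_r, scal0; reflexivity.
Qed.

(* Linear expressions over V: a reflected syntax used to decide equalities
   between R-linear combinations of finitely many vectors (tactic [lin_eq]). *)
Inductive lexpr :=
  | LAtom (i : nat) | LZero | LAdd (e1 e2 : lexpr) | LScal (r : R) (e : lexpr)
  | LOpp (e : lexpr).

Fixpoint leval (env : list V) (e : lexpr) : V :=
  match e with
  | LAtom i => nth i env zero
  | LZero => zero
  | LAdd e1 e2 => add (leval env e1) (leval env e2)
  | LScal r e => scal r (leval env e)
  | LOpp e => opp (leval env e)
  end.

Fixpoint lcoef (e : lexpr) (i : nat) : R :=
  match e with
  | LAtom j => if Nat.eqb j i then 1 else 0
  | LZero => 0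
  | LAdd e1 e2 => lcoef e1 i + lcoef e2 i
  | LScal r e => r * lcoef e i
  | LOpp e => - lcoef e i
  end.

Fixpoint lcomb (env : list V) (f : nat -> R) : V :=
  match env with
  | nil => zero
  | v :: env' => add (scal (f O) v) (lcomb env' (fun i => f (S i)))
  end.

Lemma lcomb_ext env f g :
  (forall i, (i < length env)%nat -> f i = g i) -> lcomb env f = lcomb env g.
Proof.
  revert f g; induction env as [|v env IH]; intros f g H; simpl; auto.
  rewrite (H O) by (simpl; lia).
  rewrite (IH (fun i => f (S i)) (fun i => g (S i))); auto.
  intros i Hi; apply H; simpl; lia.
Qed.

Lemma lcomb_add env f g :
  lcomb env (fun i => f i + g i) = add (lcomb env f) (lcomb env g).
Proof.
  revert f g; induction env as [|v env IH]; intros f g; simpl.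
  - rewrite addr0; reflexivity.
  - rewrite IH, (scalDl k), <- !(addA k); f_equal.
    rewrite !(addA k); f_equal; apply (addC k).
Qed.

Lemma lcomb_scal env r f : lcomb env (fun i => r * f i) = scal r (lcomb env f).
Proof.
  revert f; induction env as [|v env IH]; intros f; simpl.
  - rewrite scal_zero; reflexivity.
  - rewrite IH, (scalDr k), (scalA k); reflexivity.
Qed.

Lemma lcomb_zero env : lcomb env (fun _ => 0) = zero.
Proof.
  induction env as [|v env IH]; simpl; auto.
  rewrite IH, scal0, addr0; reflexivity.
Qed.

Lemma lcomb_atom env j :
  lcomb env (fun i => if Nat.eqb j i then 1 else 0) = nth j env zero.
Proof.
  revert j; induction env as [|v env IH]; intros j; simpl.
  - destruct j; reflexivity.
  - destruct j as [|j]; simpl.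
    + rewrite (scal1 k), lcomb_zero, addr0; reflexivity.
    + rewrite scal0, add0, IH; reflexivity.
Qed.

Lemma leval_lcomb env e : leval env e = lcomb env (lcoef e).
Proof.
  induction e; simpl.
  - symmetry; apply lcomb_atom.
  - symmetry; apply lcomb_zero.
  - rewrite IHe1, IHe2, <- lcomb_add; reflexivity.
  - rewrite IHe, <- lcomb_scal; reflexivity.
  - rewrite IHe, opp_scal, <- lcomb_scal.
    apply lcomb_ext; intros; ring.
Qed.

Fixpoint all_below (m : nat) (P : nat -> Prop) : Prop :=
  match m with O => True | S m' => all_below m' P /\ P m' end.

Lemma all_below_spec m P : all_below m P -> forall i, (i < m)%nat -> P i.
Proof.
  induction m as [|m IH]; simpl; intros H i Hi; [lia|].
  destruct H as [H Hm]; destruct (Nat.eq_dec i m) as [->|]; auto.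
  apply IH; auto; lia.
Qed.

Lemma leval_eq env e1 e2 :
  all_below (length env) (fun i => lcoef e1 i = lcoef e2 i) ->
  leval env e1 = leval env e2.
Proof.
  intros H; rewrite !leval_lcomb; apply lcomb_ext; apply all_below_spec; auto.
Qed.

End VectorSpace.

Arguments addr0 {k}. Arguments add_cancel {k}. Arguments scal0 {k}.
Arguments scal_zero {k}. Arguments opp_scal {k}.

Ltac lin_mem x l :=
  lazymatch l with
  | nil => constr:(false)
  | x :: _ => constr:(true)
  | _ :: ?l' => lin_mem x l'
  end.
Ltac lin_index x l :=
  lazymatch l with
  | x :: _ => constr:(O)
  | _ :: ?l' => let i := lin_index x l' in constr:(S i)
  end.
Ltac lin_atoms t l :=
  lazymatch t with
  | add ?a ?b => let l1 := lin_atoms a l in lin_atoms b l1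
  | scal _ ?a => lin_atoms a l
  | opp ?a => lin_atoms a l
  | zero => l
  | _ => let b := lin_mem t l in
         lazymatch b with true => l | false => constr:(t :: l) end
  end.
Ltac lin_reify t l :=
  lazymatch t with
  | add ?a ?b => let ra := lin_reify a l in let rb := lin_reify b l in
                 constr:(LAdd ra rb)
  | scal ?r ?a => let ra := lin_reify a l in constr:(LScal r ra)
  | opp ?a => let ra := lin_reify a l in constr:(LOpp ra)
  | zero => constr:(LZero)
  | _ => let i := lin_index t l in constr:(LAtom i)
  end.

(* [lin_eq] proves an equality of R-linear combinations of vectors whose
   coefficients agree up to [ring]. *)
Ltac lin_eq :=
  lazymatch goal with
  | |- @eq ?T ?lhs ?rhs =>
    let l0 := lin_atoms lhs (@nil T) in
    let l := lin_atoms rhs l0 in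
    let el := lin_reify lhs l in
    let er := lin_reify rhs l in
    change (leval _ l el = leval _ l er); apply leval_eq; simpl;
    repeat split; ring
  end.


Section LieAlgebra.
Variable k : HilbertLie.
Local Notation V := (carrier k).

Lemma br0l (y : V) : br zero y = zero.
Proof. rewrite <- (scal0 y) at 1; rewrite (brZl k); apply scal0. Qed.

Lemma br0r (y : V) : br y zero = zero.
Proof. rewrite <- (scal0 y) at 1; rewrite (brZr k); apply scal0. Qed.

Lemma br_anti (x y : V) : br x y = scal (-1) (br y x).
Proof.
  apply (add_cancel (br y x)).
  assert (H := br_alt k (add x y)).
  rewrite (brDl k), !(brDr k), !(br_alt k), add0, addr0 in H.
  rewrite (addC k), H; lin_eq.
Qed.

Lemma br_jacobi (x y z : V) : br x (br y z) = add (br (br x y) z) (br y (br x z)).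
Proof.
  assert (H := jacobi k x y z).
  rewrite (br_anti z (br x y)), (br_anti z x), (brZr k) in H.
  apply (add_cancel (add (scal (-1) (br y (br x z))) (scal (-1) (br (br x y) z)))).
  transitivity (@zero k); [rewrite <- H|]; lin_eq.
Qed.

Lemma innerDr (x y z : V) : inner x (add y z) = inner x y + inner x z.
Proof. rewrite (innerC k), (innerDl k), !(innerC k x); reflexivity. Qed.

Lemma innerZr a (x y : V) : inner x (scal a y) = a * inner x y.
Proof. rewrite (innerC k), (innerZl k), (innerC k x); reflexivity. Qed.

Lemma inner0r (y : V) : inner y zero = 0.
Proof. rewrite <- (scal0 y), innerZr; ring. Qed.

Lemma inner_br (a b c : V) : inner (br a b) c = - inner b (br a c).
Proof. rewrite br_anti, (innerZl k), (inner_inv k); ring. Qed.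

End LieAlgebra.

Arguments br0l {k}. Arguments br0r {k}. Arguments br_anti {k}.
Arguments br_jacobi {k}. Arguments innerDr {k}. Arguments innerZr {k}.
Arguments inner0r {k}. Arguments inner_br {k}.

Ltac br_simpl k :=
  repeat rewrite ?(brDl k), ?(brDr k), ?(brZl k), ?(brZr k), ?br0l, ?br0r.

(* The complexification V_C = V + iV of the underlying Lie algebra, with
   complex scalars, complex-bilinear bracket, complex conjugation, and the
   real part [rho] of the complex-bilinear extension of the inner product.
   The only analytic input is positivity: rho(u, conj u) = |Re u|^2 + |Im u|^2. *)
Section Complexification.
Variable k : HilbertLie.
Local Notation V := (carrier k).

Definition CV := (V * V)%type.
Definition czero : CV := (zero, zero).
Definition cadd (u v : CV) : CV := (add (fst u) (fst v), add (snd u) (snd v)).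
Definition csc (a : C) (u : CV) : CV :=
  (add (scal (Re a) (fst u)) (scal (- Im a) (snd u)),
   add (scal (Re a) (snd u)) (scal (Im a) (fst u))).
Definition cbr (u v : CV) : CV :=
  (add (br (fst u) (fst v)) (scal (-1) (br (snd u) (snd v))),
   add (br (fst u) (snd v)) (br (snd u) (fst v))).
Definition cconj (u : CV) : CV := (fst u, scal (-1) (snd u)).
Definition emb (x : V) : CV := (x, zero).
Definition rho (u w : CV) : R := inner (fst u) (fst w) - inner (snd u) (snd w).

Lemma pair_eq (u v : CV) : fst u = fst v -> snd u = snd v -> u = v.
Proof. destruct u, v; simpl; intros; subst; reflexivity. Qed.

Ltac ceq :=
  apply pair_eq;
  unfold csc, cbr, cconj, cadd, emb, czero, Cmult, Cplus, Cconj, RtoC, Re, Im;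
  simpl; br_simpl k; lin_eq.

Lemma cadd_comm u v : cadd u v = cadd v u.
Proof. ceq. Qed.
Lemma cadd_assoc u v w : cadd u (cadd v w) = cadd (cadd u v) w.
Proof. ceq. Qed.
Lemma cadd0 u : cadd u czero = u.
Proof. ceq. Qed.
Lemma c0add u : cadd czero u = u.
Proof. ceq. Qed.
Lemma cadd_cancel (a b c : CV) : cadd a c = cadd b c -> a = b.
Proof.
  destruct a as [a1 a2], b as [b1 b2], c as [c1 c2]; unfold cadd; simpl.
  intros H; injection H; intros H2 H1.
  rewrite !(addC k _ c1) in H1; rewrite !(addC k _ c2) in H2.
  apply add_cancel in H1; apply add_cancel in H2; subst; reflexivity.
Qed.

Lemma csc_csc a b u : csc a (csc b u) = csc (a * b) u.
Proof. ceq. Qed.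
Lemma csc_cadd a u v : csc a (cadd u v) = cadd (csc a u) (csc a v).
Proof. ceq. Qed.
Lemma csc_Cplus a b u : csc (a + b) u = cadd (csc a u) (csc b u).
Proof. ceq. Qed.
Lemma csc_czero a : csc a czero = czero.
Proof. ceq. Qed.
Lemma csc_0 u : csc 0 u = czero.
Proof. ceq. Qed.
Lemma csc_1 u : csc 1 u = u.
Proof. ceq. Qed.

Lemma cbr_caddl u v w : cbr (cadd u v) w = cadd (cbr u w) (cbr v w).
Proof. ceq. Qed.
Lemma cbr_caddr u v w : cbr w (cadd u v) = cadd (cbr w u) (cbr w v).
Proof. ceq. Qed.
Lemma cbr_cscl a u v : cbr (csc a u) v = csc a (cbr u v).
Proof. ceq. Qed.
Lemma cbr_cscr a u v : cbr u (csc a v) = csc a (cbr u v).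
Proof. ceq. Qed.
Lemma cbr0l u : cbr czero u = czero.
Proof. ceq. Qed.
Lemma cbr0r u : cbr u czero = czero.
Proof. ceq. Qed.
Lemma cbr_anti u v : cbr u v = csc (-1) (cbr v u).
Proof.
  apply pair_eq; unfold csc, cbr, RtoC, Re, Im; simpl; br_simpl k;
    rewrite ?(br_anti (fst v) (fst u)), ?(br_anti (snd v) (snd u)),
      ?(br_anti (fst v) (snd u)), ?(br_anti (snd v) (fst u)); lin_eq.
Qed.
Lemma cbr_jacobi x y z : cbr x (cbr y z) = cadd (cbr (cbr x y) z) (cbr y (cbr x z)).
Proof.
  destruct x as [x1 x2]; apply pair_eq; simpl; br_simpl k;
    rewrite ?(br_jacobi x1), ?(br_jacobi x2); lin_eq.
Qed.
Lemma cbr_emb x y : cbr (emb x) (emb y) = emb (br x y).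
Proof. ceq. Qed.

Lemma cconj_cbr u v : cconj (cbr u v) = cbr (cconj u) (cconj v).
Proof. ceq. Qed.
Lemma cconj_involutive u : cconj (cconj u) = u.
Proof. ceq. Qed.
Lemma cconj_csc a u : cconj (csc a u) = csc (Cconj a) (cconj u).
Proof. ceq. Qed.
Lemma cconj_czero : cconj czero = czero.
Proof. ceq. Qed.

Lemma rho_br u v w : rho (cbr u v) w = - rho v (cbr u w).
Proof.
  unfold rho; simpl; rewrite ?(innerDl k), ?innerDr, ?(innerZl k), ?innerZr,
    !inner_br; ring.
Qed.

Lemma rho_czero u : rho u czero = 0.
Proof. unfold rho; simpl; rewrite !inner0r; ring. Qed.

Lemma rho_conj_eq0 u : rho u (cconj u) = 0 -> u = czero.
Proof.
  destruct u as [u1 u2]; unfold rho; simpl; rewrite innerZr; intros H.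
  assert (H1 := inner_ge0 k u1); assert (H2 := inner_ge0 k u2).
  apply pair_eq; simpl; apply (inner_eq0 k); lra.
Qed.

(* If b commutes with its conjugate, then ad b is a normal operator for the
   hermitian form, hence ker (ad b)^2 = ker (ad b). *)
Lemma normal_ad_kernel b v :
  cbr b (cconj b) = czero -> cbr b (cbr b v) = czero -> cbr b v = czero.
Proof.
  intros Hb Hbbv.
  assert (Hbb : cbr (cconj b) b = czero) by (rewrite cbr_anti, Hb; apply csc_czero).
  set (w := cbr b v) in *.
  assert (Hbw : cbr (cconj b) w = czero).
  { apply rho_conj_eq0; rewrite rho_br, cconj_cbr, cconj_involutive, cbr_jacobi, Hbb,
      cbr0l, <- cconj_cbr, Hbbv, cconj_czero, cbr0r, c0add, rho_czero; ring. }
  apply rho_conj_eq0; unfold w at 1; rewrite rho_br.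
  rewrite <- (cconj_involutive b) at 1.
  rewrite <- cconj_cbr, Hbw, cconj_czero, rho_czero; ring.
Qed.

End Complexification.

Lemma Cconj_1 : Cconj 1%C = 1%C.
Proof. unfold Cconj, RtoC; simpl; rewrite Ropp_0; reflexivity. Qed.

Fixpoint Csum (m : nat) (f : nat -> C) : C :=
  match m with O => 0%C | S m' => (Csum m' f + f m')%C end.

Lemma Csum_ext m f g : (forall i, f i = g i) -> Csum m f = Csum m g.
Proof. intros H; induction m as [|m IH]; simpl; rewrite ?IH, ?H; reflexivity. Qed.

Lemma Csum_const1 m : Csum m (fun _ => 1%C) = RtoC (INR m).
Proof.
  induction m as [|m IH]; [reflexivity|].
  cbn [Csum]; rewrite IH, S_INR, RtoC_plus; reflexivity.
Qed.

Lemma geometric_sum_root (w : C) (m : nat) :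
  (w ^ m = 1)%C -> w <> 1%C -> Csum m (fun j => w ^ j)%C = 0%C.
Proof.
  intros Hm Hw.
  assert (Htel : forall p, ((w - 1) * Csum p (fun j => w ^ j) = w ^ p - 1)%C).
  { induction p as [|p IH]; cbn [Csum Cpow]; [ring|].
    transitivity ((w - 1) * Csum p (fun j => w ^ j) + (w - 1) * w ^ p)%C; [ring|].
    rewrite IH; ring. }
  assert (Hw1 : (w - 1)%C <> 0%C).
  { intros H; apply Hw; rewrite <- (Cplus_0_l 1%C), <- H; ring. }
  transitivity (/ (w - 1) * ((w - 1) * Csum m (fun j => w ^ j)))%C;
    [field; exact Hw1|].
  rewrite Htel, Hm; ring.
Qed.

Section VectorSums.
Variable k : HilbertLie.

Fixpoint vsum (m : nat) (f : nat -> CV k) : CV k :=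
  match m with O => czero k | S m' => cadd k (vsum m' f) (f m') end.

Lemma vsum_ext m f g : (forall i, (i < m)%nat -> f i = g i) -> vsum m f = vsum m g.
Proof. induction m as [|m IH]; simpl; intros H; auto; rewrite IH, H; auto. Qed.

Lemma vsum_czero m : vsum m (fun _ => czero k) = czero k.
Proof. induction m as [|m IH]; simpl; auto; rewrite IH, cadd0; reflexivity. Qed.

Lemma vsum_cadd m f g :
  vsum m (fun i => cadd k (f i) (g i)) = cadd k (vsum m f) (vsum m g).
Proof.
  induction m as [|m IH]; simpl; [rewrite cadd0; reflexivity|].
  rewrite IH, <- !cadd_assoc; f_equal.
  rewrite !cadd_assoc; f_equal; apply cadd_comm.
Qed.

Lemma csc_vsum m a f : csc k a (vsum m f) = vsum m (fun i => csc k a (f i)).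
Proof. induction m; simpl; [apply csc_czero|rewrite csc_cadd, IHm; reflexivity]. Qed.

Lemma cbr_vsuml m f v : cbr k (vsum m f) v = vsum m (fun i => cbr k (f i) v).
Proof. induction m; simpl; [apply cbr0l|rewrite cbr_caddl, IHm; reflexivity]. Qed.

Lemma cbr_vsumr m f v : cbr k v (vsum m f) = vsum m (fun i => cbr k v (f i)).
Proof. induction m; simpl; [apply cbr0r|rewrite cbr_caddr, IHm; reflexivity]. Qed.

Lemma vsum_csc_const m g u : vsum m (fun j => csc k (g j) u) = csc k (Csum m g) u.
Proof.
  induction m; simpl; [rewrite csc_0; reflexivity|rewrite IHm, csc_Cplus; reflexivity].
Qed.

Lemma vsum_swap m p (f : nat -> nat -> CV k) :
  vsum m (fun i => vsum p (fun j => f i j)) = vsum p (fun j => vsum m (fun i => f i j)).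
Proof.
  induction m; simpl; [rewrite vsum_czero; reflexivity|rewrite IHm, vsum_cadd; reflexivity].
Qed.

Lemma vsum_shift m f : cadd k (vsum m (fun i => f (S i))) (f O) = cadd k (vsum m f) (f m).
Proof.
  induction m as [|m IH]; simpl; [reflexivity|].
  rewrite <- cadd_assoc, (cadd_comm _ (f (S m))), cadd_assoc, IH; reflexivity.
Qed.

Lemma vsum_first m f : vsum (S m) f = cadd k (f O) (vsum m (fun i => f (S i))).
Proof. simpl; rewrite <- vsum_shift, cadd_comm; reflexivity. Qed.

End VectorSums.

Arguments vsum {k}.

Section RootsOfUnity.
Variable n : nat.
Hypothesis n_pos : (1 <= n)%nat.

Definition angle : R := 2 * PI / INR n.
Definition zeta : C := (cos angle, sin angle).

Lemma zeta_pow m : (zeta ^ m)%C = (cos (INR m * angle), sin (INR m * angle)).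
Proof.
  induction m as [|m IH].
  - simpl; rewrite Rmult_0_l, cos_0, sin_0; reflexivity.
  - rewrite Cpow_S, IH, S_INR; unfold Cmult, zeta; simpl.
    replace ((INR m + 1) * angle) with (angle + INR m * angle) by ring.
    rewrite cos_plus, sin_plus; f_equal; ring.
Qed.

Lemma n_angle : INR n * angle = 2 * PI.
Proof. unfold angle; field; apply not_0_INR; lia. Qed.

Lemma zeta_pow_n : (zeta ^ n)%C = 1%C.
Proof. rewrite zeta_pow, n_angle, cos_2PI, sin_2PI; reflexivity. Qed.

Lemma zeta_pow_ne1 m : (0 < m < n)%nat -> (zeta ^ m)%C <> 1%C.
Proof.
  intros Hm; rewrite zeta_pow; intros H; injection H; intros Hsin Hcos.
  assert (HPI := PI_RGT_0).
  assert (Hang : 0 < angle).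
  { unfold angle; apply Rdiv_lt_0_compat; [lra|apply lt_0_INR; lia]. }
  assert (Hpos : 0 < INR m * angle) by (apply Rmult_lt_0_compat; auto; apply lt_0_INR; lia).
  assert (Hlt : INR m * angle < 2 * PI).
  { rewrite <- n_angle; apply Rmult_lt_compat_r; auto; apply lt_INR; lia. }
  destruct (sin_eq_0_0 _ Hsin) as [z Hz]; rewrite Hz in Hpos, Hlt, Hcos.
  assert (z = 1%Z) as ->.
  { assert (0 < z)%Z by (apply lt_IZR; nra).
    assert (z < 2)%Z by (apply lt_IZR; nra). lia. }
  rewrite Rmult_1_l, cos_PI in Hcos; lra.
Qed.

Lemma zeta_pow_unit j : (zeta ^ j * Cconj zeta ^ j)%C = 1%C.
Proof.
  rewrite <- Cpow_mult_l.
  replace (zeta * Cconj zeta)%C with (RtoC 1); [apply Cpow_1_l|].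
  unfold Cmult, Cconj, zeta; simpl.
  rewrite <- (sin2_cos2 angle); unfold Rsqr, RtoC; f_equal; ring.
Qed.

Lemma zeta_conj_pow_n : (Cconj zeta ^ n)%C = 1%C.
Proof. rewrite <- Cpow_conj, zeta_pow_n; apply Cconj_1. Qed.

Lemma zeta_conj_pow_ne1 m : (0 < m < n)%nat -> (Cconj zeta ^ m)%C <> 1%C.
Proof.
  intros Hm H; apply (zeta_pow_ne1 m Hm).
  rewrite <- (Cconj_conj (zeta ^ m)), Cpow_conj, H; apply Cconj_1.
Qed.

End RootsOfUnity.

Section AbelianCriterion.
Variable k : HilbertLie.
Variable phi : k -> k.
Variable z : k -> Prop.
Variable n : nat.
Hypothesis phi_add : forall x y, phi (add x y) = add (phi x) (phi y).
Hypothesis phi_scal : forall a x, phi (scal a x) = scal a (phi x).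
Hypothesis phi_br : forall x y, phi (br x y) = br (phi x) (phi y).
Hypothesis n_pos : (1 <= n)%nat.
Hypothesis phi_period : forall x, z x -> iter_fun n phi x = x.
Hypothesis z_subalgebra : subalgebra k z.
Hypothesis z_phi : forall x, z x -> z (phi x).
Hypothesis fixed_central : forall x y, z x -> phi x = x -> z y -> br x y = zero.

Local Notation zeta := (zeta n).

Lemma phi_zero : phi zero = zero.
Proof. rewrite <- (scal0 zero) at 1; rewrite phi_scal; apply scal0. Qed.

Lemma z_iter m x : z x -> z (iter_fun m phi x).
Proof. induction m; simpl; auto. Qed.

Definition cphi (u : CV k) : CV k := (phi (fst u), phi (snd u)).
Definition zC (u : CV k) : Prop := z (fst u) /\ z (snd u).
Definition eigen (lam : C) (u : CV k) : Prop := zC u /\ cphi u = csc k lam u.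

Ltac phi_eq :=
  apply pair_eq; unfold cphi, cadd, csc, cbr, cconj, emb, czero; simpl;
  repeat rewrite ?phi_add, ?phi_scal, ?phi_br, ?phi_zero; reflexivity.

Lemma cphi_cadd u v : cphi (cadd k u v) = cadd k (cphi u) (cphi v).
Proof. phi_eq. Qed.
Lemma cphi_csc a u : cphi (csc k a u) = csc k a (cphi u).
Proof. phi_eq. Qed.
Lemma cphi_cbr u v : cphi (cbr k u v) = cbr k (cphi u) (cphi v).
Proof. phi_eq. Qed.
Lemma cphi_cconj u : cphi (cconj k u) = cconj k (cphi u).
Proof. phi_eq. Qed.
Lemma cphi_emb x : cphi (emb k x) = emb k (phi x).
Proof. phi_eq. Qed.
Lemma cphi_vsum m f : cphi (vsum m f) = vsum m (fun i => cphi (f i)).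
Proof.
  induction m; simpl; [phi_eq|rewrite cphi_cadd, IHm; reflexivity].
Qed.

Lemma zC_czero : zC (czero k).
Proof. destruct z_subalgebra as [z0 _]; split; exact z0. Qed.
Lemma zC_cadd u v : zC u -> zC v -> zC (cadd k u v).
Proof. destruct z_subalgebra as [_ [zD _]]; intros [] []; split; simpl; auto. Qed.
Lemma zC_csc a u : zC u -> zC (csc k a u).
Proof. destruct z_subalgebra as [_ [zD [zZ _]]]; intros []; split; simpl; auto. Qed.
Lemma zC_cbr u v : zC u -> zC v -> zC (cbr k u v).
Proof. destruct z_subalgebra as [_ [zD [zZ zB]]]; intros [] []; split; simpl; auto. Qed.
Lemma zC_cconj u : zC u -> zC (cconj k u).
Proof. destruct z_subalgebra as [_ [_ [zZ _]]]; intros []; split; simpl; auto. Qed.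
Lemma zC_emb x : z x -> zC (emb k x).
Proof. destruct z_subalgebra as [z0 _]; split; auto. Qed.
Lemma zC_vsum m f : (forall i, zC (f i)) -> zC (vsum m f).
Proof. intros H; induction m; simpl; [apply zC_czero|apply zC_cadd; auto]. Qed.

Lemma eigen_cbr a b u v : eigen a u -> eigen b v -> eigen (a * b) (cbr k u v).
Proof.
  intros [Hu Eu] [Hv Ev]; split; [apply zC_cbr; auto|].
  rewrite cphi_cbr, Eu, Ev, cbr_cscl, cbr_cscr, csc_csc, Cmult_comm; reflexivity.
Qed.

Lemma eigen_cconj a u : eigen a u -> eigen (Cconj a) (cconj k u).
Proof.
  intros [Hu Eu]; split; [apply zC_cconj; auto|].
  rewrite cphi_cconj, Eu, cconj_csc; reflexivity.
Qed.

Lemma eigen1_central c v : eigen 1 c -> zC v -> cbr k c v = czero k.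
Proof.
  destruct c as [c1 c2]; intros [[Hc1 Hc2] Ec] [Hv1 Hv2]; rewrite csc_1 in Ec.
  injection Ec; intros F2 F1; simpl in *.
  apply pair_eq; simpl; rewrite !fixed_central; auto; lin_eq.
Qed.

Lemma eigen_commutes_conj lam b :
  eigen lam b -> (lam * Cconj lam)%C = 1 -> cbr k b (cconj k b) = czero k.
Proof.
  intros Eb Hlam.
  assert (Ec : eigen 1 (cconj k (cbr k b (cconj k b)))).
  { rewrite <- Cconj_1, <- Hlam; apply eigen_cconj, eigen_cbr, eigen_cconj; auto. }
  apply rho_conj_eq0; rewrite rho_br, (cbr_anti _ b), eigen1_central;
    [rewrite csc_czero, rho_czero; ring|exact Ec|apply Eb].
Qed.

Definition eigen_commute (p q : nat) : Prop :=
  forall a b, eigen (zeta ^ p) a -> eigen (zeta ^ q) b -> cbr k a b = czero k.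

Lemma eigen_commute_0 q : eigen_commute 0 q.
Proof. intros a b Ea Eb; apply eigen1_central; [exact Ea|apply Eb]. Qed.

Lemma eigen_commute_sym p q : eigen_commute p q -> eigen_commute q p.
Proof. intros H a b Ea Eb; rewrite cbr_anti, H; auto; apply csc_czero. Qed.

(* [E_q, E_(p+q)] = 0 forces [E_q, E_p] = 0: for b in E_q and v in E_p,
   [b,v] lies in E_(p+q), so (ad b)^2 v = 0 and normality gives [b,v] = 0. *)
Lemma eigen_commute_add p q : eigen_commute q (p + q) -> eigen_commute q p.
Proof.
  intros H b v Eb Ev.
  apply normal_ad_kernel; [apply (eigen_commutes_conj (zeta ^ q)); auto|].
  - rewrite Cpow_conj; apply zeta_pow_unit.
  - apply H; auto.
    rewrite Nat.add_comm, Cpow_add_r; apply eigen_cbr; auto.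
Qed.

Lemma eigen_commute_chain m p q : eigen_commute (p + m * q) q -> eigen_commute p q.
Proof.
  revert p; induction m as [|m IH]; intros p H.
  - rewrite Nat.add_0_r in H; exact H.
  - apply eigen_commute_sym, eigen_commute_add, eigen_commute_sym.
    apply IH; replace (p + q + m * q)%nat with (p + S m * q)%nat by lia; exact H.
Qed.

Lemma eigen_commute_period a b c : eigen_commute a b -> eigen_commute (a + n * c) b.
Proof.
  intros H u v Eu Ev; apply H; auto.
  rewrite Cpow_add_r, Cpow_mult_r, (zeta_pow_n n n_pos), Cpow_1_l, Cmult_1_r in Eu; exact Eu.
Qed.

(* subtracting q from p (modulo n) *)
Lemma eigen_commute_sub p q : (q <= p)%nat -> eigen_commute (p - q) q -> eigen_commute p q.
Proof.
  intros Hqp H; apply (eigen_commute_chain (n - 1)).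
  replace (p + (n - 1) * q)%nat with (p - q + n * q)%nat by nia.
  apply eigen_commute_period, H.
Qed.

(* Euclidean descent down to eigen_commute_0 *)
Lemma eigen_commute_all p q : eigen_commute p q.
Proof.
  remember (p + q)%nat as s eqn:Hs; revert p q Hs.
  induction s as [s IH] using lt_wf_ind; intros p q Hs.
  destruct p as [|p']; [apply eigen_commute_0|].
  destruct q as [|q']; [apply eigen_commute_sym, eigen_commute_0|].
  destruct (Nat.le_gt_cases (S q') (S p')) as [Hle|Hlt].
  - apply eigen_commute_sub; auto; apply (IH (S p')); lia.
  - apply eigen_commute_sym, eigen_commute_sub; [lia|]; apply (IH (S q')); lia.
Qed.

Definition proj (j : nat) (x : k) : CV k :=
  vsum n (fun i => csc k (Cconj zeta ^ (j * i)) (emb k (iter_fun i phi x))).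

Lemma proj_eigen j x : z x -> eigen (zeta ^ j) (proj j x).
Proof.
  intros Hx; split.
  { apply zC_vsum; intros i; apply zC_csc, zC_emb, z_iter, Hx. }
  unfold proj; set (f := fun i => csc k (Cconj zeta ^ (j * i)) (emb k (iter_fun i phi x))).
  assert (Hf : forall i, cphi (f i) = csc k (zeta ^ j) (f (S i))).
  { intros i; unfold f; rewrite cphi_csc, cphi_emb, csc_csc; f_equal.
    rewrite Nat.mul_succ_r, Cpow_add_r, Cmult_assoc, (Cmult_comm (zeta ^ j)),
      <- Cmult_assoc, zeta_pow_unit, Cmult_1_r; reflexivity. }
  rewrite cphi_vsum, (vsum_ext _ n _ _ (fun i _ => Hf i)), <- csc_vsum; f_equal.
  apply (cadd_cancel _ _ _ (f O)); rewrite vsum_shift; f_equal.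
  unfold f; rewrite (phi_period x Hx), Nat.mul_0_r, Nat.mul_comm, Cpow_mult_r,
    (zeta_conj_pow_n n n_pos), Cpow_1_l; reflexivity.
Qed.

Lemma proj_sum x : vsum n (fun j => proj j x) = csc k (RtoC (INR n)) (emb k x).
Proof.
  unfold proj; rewrite vsum_swap.
  rewrite (vsum_ext _ n _
    (fun i => csc k (Csum n (fun j => (Cconj zeta ^ i) ^ j)%C) (emb k (iter_fun i phi x)))).
  2:{ intros i _; rewrite vsum_csc_const; f_equal; apply Csum_ext; intros j.
      rewrite Nat.mul_comm, Cpow_mult_r; reflexivity. }
  replace (@vsum k n) with (@vsum k (S (n - 1))) by (f_equal; lia).
  rewrite vsum_first, (Csum_ext _ _ (fun _ => 1%C)), Csum_const1 by (intros; apply Cpow_1_l).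
  rewrite (vsum_ext _ (n - 1) _ (fun _ => czero k)), vsum_czero, cadd0; [reflexivity|].
  intros i Hi; rewrite geometric_sum_root, csc_0; [reflexivity| |].
  - rewrite <- Cpow_mult_r, Nat.mul_comm, Cpow_mult_r, (zeta_conj_pow_n n n_pos); apply Cpow_1_l.
  - apply (zeta_conj_pow_ne1 n n_pos); lia.
Qed.

(* the criterion: [n x, n y] = sum_(i,j) [P_i x, P_j y] = 0 *)
Lemma abelian_of_central_fixed x y : z x -> z y -> br x y = zero.
Proof.
  intros Hx Hy.
  assert (H : cbr k (vsum n (fun i => proj i x)) (vsum n (fun j => proj j y)) = czero k).
  { rewrite cbr_vsuml, (vsum_ext _ n _ (fun _ => czero k)); [apply vsum_czero|].
    intros i _; rewrite cbr_vsumr, (vsum_ext _ n _ (fun _ => czero k)); [apply vsum_czero|].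
    intros j _; apply (eigen_commute_all i j); apply proj_eigen; auto. }
  rewrite !proj_sum, cbr_cscl, cbr_cscr, cbr_emb, csc_csc in H.
  assert (Hn : RtoC (INR n) <> 0%C).
  { intros H0; apply (f_equal fst) in H0; simpl in H0; revert H0.
    apply not_0_INR; lia. }
  apply (f_equal (csc k (/ (RtoC (INR n) * RtoC (INR n)))%C)) in H.
  rewrite csc_csc, csc_czero in H.
  replace (/ (RtoC (INR n) * RtoC (INR n)) * (RtoC (INR n) * RtoC (INR n)))%C
    with (RtoC 1) in H by (field; exact Hn).
  rewrite csc_1 in H; apply (f_equal fst) in H; exact H.
Qed.

End AbelianCriterion.

Lemma centralizer_subalgebra (k : HilbertLie) (t : k -> Prop) :
  subalgebra k (centralizer k t).
Proof.
  split; [|split; [|split]].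
  - intros y _; apply br0l.
  - intros x y Hx Hy s Hs; rewrite (brDl k), Hx, Hy; auto; apply add0.
  - intros a x Hx s Hs; rewrite (brZl k), Hx; auto; apply scal_zero.
  - intros x y Hx Hy s Hs.
    rewrite br_anti, br_jacobi, (br_anti s x), (br_anti s y), (Hx s Hs), (Hy s Hs),
      !scal_zero, br0l, br0r, add0; apply scal_zero.
Qed.

Section FixedPointAlgebra.
Variable k : HilbertLie.
Variable phi : k -> k.
Variable t : k -> Prop.
Hypothesis phi_add : forall x y, phi (add x y) = add (phi x) (phi y).
Hypothesis phi_scal : forall a x, phi (scal a x) = scal a (phi x).
Hypothesis phi_br : forall x y, phi (br x y) = br (phi x) (phi y).
Hypothesis t_max : max_abelian_in k (fixed_pts k phi) t.

Lemma t_fixed s : t s -> phi s = s.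
Proof. destruct t_max as [_ [H _]]; apply H. Qed.

Lemma t_in_centralizer s : t s -> centralizer k t s.
Proof. destruct t_max as [[_ H] _]; intros Hs y Hy; apply H; auto. Qed.

(* phi fixes t pointwise, hence preserves its centralizer *)
Lemma centralizer_phi_invariant x : centralizer k t x -> centralizer k t (phi x).
Proof.
  intros Hx s Hs; rewrite <- (t_fixed s Hs) at 1; rewrite <- phi_br, Hx; auto.
  rewrite <- (scal0 zero) at 1; rewrite phi_scal; apply scal0.
Qed.

(* Maximality: a fixed element x centralizing t lies in t, since t + R x is
   an abelian subalgebra of fixed points containing t. *)
Lemma fixed_centralizer_in_t x : centralizer k t x -> phi x = x -> t x.
Proof.
  intros Hx Hfix; destruct t_max as [[[t0 [tD [tZ _]]] t_ab] [t_fix t_maxl]].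
  set (S := fun y => exists a s, t s /\ y = add s (scal a x)).
  assert (S_ab : forall y1 y2, S y1 -> S y2 -> br y1 y2 = zero).
  { intros y1 y2 [a [s1 [H1 ->]]] [b [s2 [H2 ->]]]; br_simpl k.
    rewrite (t_ab s1 s2), (Hx s2), (br_anti s1 x), (Hx s1), (br_alt k); auto.
    rewrite !scal_zero, !addr0; reflexivity. }
  assert (S_t : forall s, t s -> S s).
  { intros s Hs; exists 0, s; split; auto; rewrite scal0, addr0; reflexivity. }
  apply (t_maxl S).
  - split; [|exact S_ab]; split; [|split; [|split]].
    + apply S_t, t0.
    + intros y1 y2 [a [s1 [H1 ->]]] [b [s2 [H2 ->]]].
      exists (a + b), (add s1 s2); split; auto; rewrite (scalDl k); lin_eq.
    + intros c y [a [s [Hs ->]]]; exists (c * a), (scal c s); split; auto.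
      rewrite <- (scalA k); lin_eq.
    + intros y1 y2 H1 H2; rewrite S_ab; auto; apply S_t, t0.
  - intros y [a [s [Hs ->]]]; unfold fixed_pts.
    rewrite phi_add, phi_scal, Hfix, (t_fixed s Hs); reflexivity.
  - exact S_t.
  - exists 1, zero; split; auto; rewrite (scal1 k), add0; reflexivity.
Qed.

Lemma centralizer_fixed_central x y :
  centralizer k t x -> phi x = x -> centralizer k t y -> br x y = zero.
Proof.
  intros Hx Hfix Hy; rewrite br_anti, (Hy x); [apply scal_zero|].
  apply fixed_centralizer_in_t; auto.
Qed.

End FixedPointAlgebra.

Theorem lemmaD2 (k : HilbertLie) (phi : k -> k) (t : k -> Prop) :
  is_automorphism k phi -> finite_order k phi ->
  max_abelian_in k (fixed_pts k phi) t ->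
  max_abelian_in k (whole k) (centralizer k t).
Proof.
  intros [phi_add [phi_scal [phi_br _]]] [n [n_pos phi_period]] t_max.
  split; [split|split].
  - apply centralizer_subalgebra.
  - intros x y Hx Hy.
    apply (abelian_of_central_fixed k phi (centralizer k t) n); auto.
    + apply centralizer_subalgebra.
    + apply (centralizer_phi_invariant k phi t); auto.
    + apply (centralizer_fixed_central k phi t); auto.
  - intros x _; exact I.
  - (* an abelian subalgebra containing t centralizes t *)
    intros S [_ S_ab] _ S_sup x Hx y Hy.
    apply S_ab; auto; apply S_sup, (t_in_centralizer k phi t); auto.
Qed.
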